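(* For every closed term $t$ over $\Sigma$, the term graph $\mathcal{G}(t)$ is constructor-shared. Moreover, if $G$ is a closed, constructor-shared term graph and $G\rightarrow I$ in the constructor graph rewrite system corresponding to a constructor rewrite system $R$ over $\Sigma$, then $I$ is constructor-shared.
   Context: A constructor rewrite system $R$ over a signature $\Sigma$ (symbols are constructors or function symbols, with arities) consists of rules $\mathbf{f}(p_1,\dots,p_n)\rightarrow t$ with $\mathbf{f}$ a function symbol, $p_i$ patterns (constructors and variables), assumed orthogonal (linear, non-overlapping left-hand sides). A labelled graph is $(V,\alpha,\delta)$: finite $V$, ordered successor lists $\alpha:V\to V^*$, partial labelling $\delta:V\rightharpoonup\Sigma$ with the number of successors equal to the arity of the label (0 if unlabelled), acyclic; it is closed if $\delta$ is total; a term graph additionally has a root; term graphs are taken up to isomorphism. Homomorphisms preserve labels and successor lists of labelled vertices (and root). A path is a constructor path if all its vertices are labelled by constructors; a left path if its first vertex is labelled by a function symbol and the others by constructors or unlabelled. A graph rewrite rule $(H,r,s)$ has every path from $r$ a left path. A redex in $G$: a rule with a homomorphism $\varphi:H|_r\to G$ ($H|_r$ = vertices reachable from $r$, root $r$) such that every path from $\varphi(v)$, for $v$ unlabelled in $H|_r$, is a constructor path. Firing: add a fresh copy of the vertices of $H$ reachable from $s$ but not from $r$ (successors in $H|_r$ replaced by their $\varphi$-images); redirect every edge into $\varphi(r)$, and the root if it is $\varphi(r)$, to the copy of $s$ (to $\varphi(s)$ if $s$ is reachable from $r$); remove vertices unreachable from the root; the result is $I$, written $G\rightarrow I$. $\mathcal{G}(t)$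 is the tree term graph with one vertex per symbol occurrence in $t$. A term rule $l\rightarrow r$ corresponds to the graph rule obtained from the disjoint union of the trees of $l$ and $r$ by identifying vertices of the same variable, left root = root of $l$, right root = root of $r$; the constructor graph rewrite system corresponding to $R$ is the set of these graph rules. A term graph is constructor-shared if whenever a vertex can be reached from the root by two distinct paths, every path starting at that vertex is a constructor path. *)

From Stdlib Require List.
From mathcomp Require Import all_boot.
Set Implicit Arguments.
Unset Strict Implicit.
Unset Printing Implicit Defensive.

Record signature := Signature {
  sym : Type;
  arity : sym -> nat;
  is_con : sym -> bool }.

Section Terms.
Variable S : signature.

Inductive term := Var of nat | App of sym S & seq term.

(* well-formed w.r.t. arities (a term "over Sigma") *)
Fixpoint wft (t : term) : bool :=
  match t with
  | Var _ => true
  | App f ts => (size ts == arity f) && all wft ts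
  end.

Fixpoint vars (t : term) : seq nat :=
  match t with
  | Var x => [:: x]
  | App _ ts => flatten (map vars ts)
  end.

Definition closed_term (t : term) : bool := wft t && (vars t == [::]).

Fixpoint is_pat (t : term) : bool :=
  match t with
  | Var _ => true
  | App f ts => is_con f && all is_pat ts
  end.

Fixpoint subst (sigma : nat -> term) (t : term) : term :=
  match t with
  | Var x => sigma x
  | App f ts => App f (map (subst sigma) ts)
  end.

(* positions (root-first lists of argument indices) of all symbol
   occurrences of t *)
Fixpoint pos (t : term) : seq (seq nat) :=
  match t with
  | Var _ => [:: [::]]
  | App _ ts =>
      [::] :: (fix aux (k : nat) (us : seq term) : seq (seq nat) :=
                 match us with
                 | [::] => [::]
                 | u :: us' => map (cons k) (pos u) ++ aux k.+1 us'
                 end) 0 ts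
  end.

Fixpoint subterm (t : term) (p : seq nat) : option term :=
  match p with
  | [::] => Some t
  | k :: p' =>
      match t with
      | Var _ => None
      | App _ ts => if k < size ts then subterm (nth (Var 0) ts k) p' else None
      end
  end.

Definition tlab (ot : option term) : option (sym S) :=
  if ot is Some (App f _) then Some f else None.

Definition nchildren (ot : option term) : nat :=
  if ot is Some (App _ ts) then size ts else 0.

Lemma nil_pos (t : term) : [::] \in pos t.
Proof. by case: t => [x|f ts] /=; rewrite in_cons eqxx. Qed.

(* Constructor rewrite system: a list of rules l -> r, with l = f(p1..pn),
   f a function symbol, pi patterns, all terms over Sigma, rules being
   rewrite rules (Var r included in Var l), orthogonal (left-linear and
   non-overlapping: no two distinct rules have left-hand sides with a
   common instance). *)
Definition crs (R : seq (term * term)) : Prop :=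
  (forall l r, List.In (l, r) R ->
     [/\ wft l, wft r,
         (exists f ps, l = App f ps /\ ~~ is_con f /\ all is_pat ps),
         uniq (vars l) & {subset vars r <= vars l}]) /\
  (forall i j, i < size R -> j < size R -> i <> j ->
     forall sigma1 sigma2 : nat -> term,
       subst sigma1 (nth (Var 0, Var 0) R i).1 <>
       subst sigma2 (nth (Var 0, Var 0) R j).1).

End Terms.

Record lgraph (S : signature) := LGraph {
  vtx : finType;
  succ : vtx -> seq vtx;
  lab : vtx -> option (sym S) }.

Record tgraph (S : signature) := TGraph {
  tg_graph : lgraph S;
  tg_root : vtx tg_graph }.

Record grule (S : signature) := GRule {
  gr_graph : lgraph S;
  gr_l : vtx gr_graph;
  gr_r : vtx gr_graph }.

Section Graphs.
Variable S : signature.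

Definition edge (G : lgraph S) : rel (vtx G) := grel (@succ S G).
Arguments edge : clear implicits.

Definition arity_of (o : option (sym S)) : nat :=
  if o is Some f then arity f else 0.

(* a path from v is a nonempty vertex sequence v :: p following edges *)
Definition wf_lgraph (G : lgraph S) : Prop :=
  (forall v : vtx G, size (succ v) = arity_of (lab v)) /\
  (forall v (p : seq (vtx G)), path (edge G) v p -> p != [::] -> last v p != v).

Definition is_termgraph (G : tgraph S) : Prop := wf_lgraph (tg_graph G).

Definition closed_graph (G : tgraph S) : Prop :=
  forall v : vtx (tg_graph G), lab v <> None.

Definition con_vertex (G : lgraph S) (v : vtx G) : bool :=
  if lab v is Some f then is_con f else false.

Definition con_path (G : lgraph S) (p : seq (vtx G)) : bool :=
  all (@con_vertex G) p.

Definition constructor_shared (G : tgraph S) : Prop :=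
  forall w : vtx (tg_graph G),
    (exists p1 p2 : seq (vtx (tg_graph G)),
        [/\ p1 != p2,
            path (edge _) (tg_root G) p1, last (tg_root G) p1 = w,
            path (edge _) (tg_root G) p2 & last (tg_root G) p2 = w]) ->
    forall p, path (edge _) w p -> con_path (w :: p).

Definition tg_iso (A B : tgraph S) : Prop :=
  exists f : vtx (tg_graph A) -> vtx (tg_graph B),
    [/\ bijective f,
        (forall v, lab (f v) = lab v),
        (forall v, succ (f v) = map f (succ v)) &
        f (tg_root A) = tg_root B].

(* homomorphism of labelled graphs from H|_r into G (phi is only relevant
   on the vertices of H reachable from r) *)
Definition is_hom_from_l (H : grule S) (G : tgraph S)
    (phi : vtx (gr_graph H) -> vtx (tg_graph G)) : Prop :=
  forall v, connect (edge _) (gr_l H) v ->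
    forall f, lab v = Some f ->
      lab (phi v) = Some f /\ succ (phi v) = map phi (succ v).

Definition is_redex (H : grule S) (G : tgraph S)
    (phi : vtx (gr_graph H) -> vtx (tg_graph G)) : Prop :=
  is_hom_from_l phi /\
  (forall v, connect (edge _) (gr_l H) v -> lab v = None ->
     forall p, path (edge _) (phi v) p -> con_path (phi v :: p)).

Section Fire.
Variables (H : grule S) (G : tgraph S)
          (phi : vtx (gr_graph H) -> vtx (tg_graph G)).

Definition newP : pred (vtx (gr_graph H)) := fun h =>
  connect (edge _) (gr_r H) h && ~~ connect (edge _) (gr_l H) h.

Definition NewV : finType := {h : vtx (gr_graph H) | newP h}.

Definition W : finType := (vtx (tg_graph G) + NewV)%type.

(* image of a vertex of H: its fresh copy if reachable from s but not
   from r, its phi-image otherwise (then it is in H|_r) *)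
Definition img (h : vtx (gr_graph H)) : W :=
  match (insub h : option NewV) with
  | Some u => inr u
  | None => inl (phi h)
  end.

Definition tgt : W := img (gr_r H).

Definition redir (x : W) : W :=
  if x == inl (phi (gr_l H)) then tgt else x.

Definition succW (x : W) : seq W :=
  match x with
  | inl v => map redir (map (@inl _ NewV) (succ v))
  | inr u => map redir (map img (succ (val u)))
  end.

Definition labW (x : W) : option (sym S) :=
  match x with
  | inl v => lab v
  | inr u => lab (val u)
  end.

Definition rootW : W := redir (inl (tg_root G)).

Definition reachW : pred W := fun x => connect (grel succW) rootW x.

Definition Vfin : finType := {x : W | reachW x}.

Definition succF (x : Vfin) : seq Vfin := pmap insub (succW (val x)).

Definition labF (x : Vfin) : option (sym S) := labW (val x).

Definition rootF : Vfin := exist _ rootW (connect0 _ _).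

Definition fire : tgraph S := @TGraph S (@LGraph S _ succF labF) rootF.

End Fire.

End Graphs.

Section Translation.
Variable S : signature.

Definition tree_vtx (t : term S) : finType := seq_sub (pos t).

Definition tree_succ (t : term S) (p : tree_vtx t) : seq (tree_vtx t) :=
  pmap insub [seq rcons (val p) k | k <- iota 0 (nchildren (subterm t (val p)))].

Definition tree_lab (t : term S) (p : tree_vtx t) : option (sym S) :=
  tlab (subterm t (val p)).

Definition tree_root (t : term S) : tree_vtx t := SeqSub (nil_pos t).

Definition tree_graph (t : term S) : tgraph S :=
  @TGraph S (@LGraph S _ (@tree_succ t) (@tree_lab t)) (tree_root t).

(* vertex names of the rule graph: inl (true, p) = non-variable position p
   of l, inl (false, p) = non-variable position p of r, inr x = the
   (single, shared) vertex of variable x *)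
Definition rname : choiceType := ((bool * seq nat) + nat)%type.

Definition side (l r : term S) (b : bool) : term S := if b then l else r.

Definition nm (b : bool) (t : term S) (p : seq nat) : rname :=
  if subterm t p is Some (Var x) then inr x else inl (b, p).

Definition rnodes (l r : term S) : seq rname :=
  map (nm true l) (pos l) ++ map (nm false r) (pos r).

Definition rule_vtx (l r : term S) : finType := seq_sub (rnodes l r).

Definition rule_lab (l r : term S) (x : rule_vtx l r) : option (sym S) :=
  match val x with
  | inl (b, p) => tlab (subterm (side l r b) p)
  | inr _ => None
  end.

Definition rule_succ (l r : term S) (x : rule_vtx l r) : seq (rule_vtx l r) :=
  match val x with
  | inl (b, p) =>
      pmap insub [seq nm b (side l r b) (rcons p k)
                 | k <- iota 0 (nchildren (subterm (side l r b) p))]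
  | inr _ => [::]
  end.

Lemma rnodes_l (l r : term S) : nm true l [::] \in rnodes l r.
Proof. by rewrite mem_cat (map_f _ (nil_pos l)). Qed.

Lemma rnodes_r (l r : term S) : nm false r [::] \in rnodes l r.
Proof. by rewrite mem_cat (map_f _ (nil_pos r)) orbT. Qed.

Definition rule_graph (l r : term S) : grule S :=
  @GRule S (@LGraph S _ (@rule_succ l r) (@rule_lab l r))
        (SeqSub (rnodes_l l r)) (SeqSub (rnodes_r l r)).

Definition gstep (R : seq (term S * term S)) (G I : tgraph S) : Prop :=
  exists l r, List.In (l, r) R /\
    exists phi : vtx (gr_graph (rule_graph l r)) -> vtx (tg_graph G),
      is_redex phi /\ tg_iso (fire phi) I.

End Translation.

From mathcomp Require Import all_boot.
Set Implicit Arguments. Unset Strict Implicit. Unset Printing Implicit Defensive.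

(* A term graph is constructor-shared as soon as every vertex starting a
   non-constructor path has at most one parent, and none if it is the root:
   two distinct paths from the root to such a vertex can then be peeled off
   edge by edge.  Trees satisfy this trivially.  After firing a redex in a
   constructor-shared graph G, the parents of the copy of the right root are
   the former parents of the redex root, which is labelled by a function
   symbol and so has at most one parent in G; the other fresh vertices form
   the non-variable part of the right-hand side, a tree; and every remaining
   vertex either has the same parents as in G or starts only constructor
   paths, since the redex maps the variables onto such vertices. *)

Lemma connect_preserved (T : finType) (e : rel T) (P : T -> Prop) x y :
  (forall a b, e a b -> P a -> P b) -> connect e x y -> P x -> P y.
Proof.
move=> P_e /connectP[p path_p ->]; elim: p x path_p => [|z p IH] x //=.
by case/andP=> e_xz /IH P_last /(P_e _ _ e_xz).
Qed.

Lemma edgeE S (G : lgraph S) (x y : vtx G) : edge x y = (y \in succ x).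
Proof. by []. Qed.

Lemma path_last_uniq (T : Type) (e : rel T) (P : T -> Prop) (r : T) :
  (forall x y, e x y -> P y -> P x) ->
  (forall x1 x2 y, P y -> e x1 y -> e x2 y -> x1 = x2) ->
  (forall x, P r -> ~~ e x r) ->
  forall p1 p2, path e r p1 -> path e r p2 ->
    last r p1 = last r p2 -> P (last r p1) -> p1 = p2.
Proof.
move=> P_pred uniq_parent root_orphan.
elim/last_ind=> [|q1 y1 IH] p2; case/lastP: p2 => [|q2 y2] //=;
  rewrite ?rcons_path ?last_rcons.
- move=> _ /andP[_ e_r] r_y /(root_orphan (last r q2)).
  by rewrite -r_y in e_r; rewrite e_r.
- move=> /andP[_ e_r] _ y_r; rewrite y_r => /(root_orphan (last r q1)).
  by rewrite y_r in e_r; rewrite e_r.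
move=> /andP[path1 e1] /andP[path2 e2] y12 Py; subst y2.
have same_parent := uniq_parent _ _ _ Py e1 e2.
by rewrite (IH q2) //; apply: P_pred e1 Py.
Qed.

Section ConstructorShared.
Variable S : signature.

Definition con_from (G : lgraph S) (v : vtx G) : Prop :=
  forall p, path (@edge _ G) v p -> con_path (v :: p).

Lemma con_from_edge (G : lgraph S) (x y : vtx G) :
  edge x y -> con_from x -> con_from y.
Proof.
move=> e_xy con_x p path_p.
by have /andP[] := con_x (y :: p) (introT andP (conj e_xy path_p)).
Qed.

Lemma constructor_shared_unique_parent (G : tgraph S) :
  (forall x1 x2 y : vtx (tg_graph G),
     ~ con_from y -> edge x1 y -> edge x2 y -> x1 = x2) ->
  (forall x, ~ con_from (tg_root G) -> ~~ edge x (tg_root G)) ->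
  constructor_shared G.
Proof.
move=> uniq_parent root_orphan w [p1 [p2 [neq path1 last1 path2 last2]]] p path_p.
apply/negPn/negP => not_con; case/eqP: neq.
apply: (path_last_uniq _ uniq_parent root_orphan) => //.
- by move=> x y /con_from_edge con_xy not_con_y /con_xy.
- by rewrite last1 last2.
- by rewrite last1 => /(_ p path_p); apply/negP.
Qed.

Lemma tg_iso_constructor_shared (A B : tgraph S) :
  tg_iso A B -> constructor_shared A -> constructor_shared B.
Proof.
move=> [f [[g fK gK] lab_f succ_f root_f]] shA.
have path_f x q : path (@edge _ _) (f x) (map f q) = path (@edge _ _) x q.
  rewrite path_map; apply: eq_path => a b.
  by rewrite /edge /= succ_f mem_map //; apply: can_inj fK.
have con_f q : con_path (map f q) = con_path q.
  by rewrite /con_path all_map; apply: eq_all => a; rewrite /= /con_vertex lab_f.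
have fgK q : map f (map g q) = q by rewrite -map_comp (eq_map gK) map_id.
have root_g : g (tg_root B) = tg_root A by rewrite -root_f fK.
move=> w [p1 [p2 [neq path1 last1 path2 last2]]] p path_p.
rewrite -(gK w) -(fgK p) -map_cons con_f.
apply: shA; last by rewrite -path_f gK fgK.
exists (map g p1), (map g p2); split.
- by apply: contraNneq neq => /(congr1 (map f)); rewrite !fgK => ->.
- by rewrite -root_g -path_f gK fgK.
- by rewrite -root_g last_map last1.
- by rewrite -root_g -path_f gK fgK.
- by rewrite -root_g last_map last2.
Qed.

Lemma constructor_shared_parents (G : tgraph S) (x1 x2 y : vtx (tg_graph G)) :
  constructor_shared G -> connect (@edge _ _) (tg_root G) x1 ->
  connect (@edge _ _) (tg_root G) x2 -> edge x1 y -> edge x2 y -> x1 != x2 ->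
  con_from y.
Proof.
move=> shG /connectP[p1 path1 last1] /connectP[p2 path2 last2] e1 e2 neq.
apply: shG; exists (rcons p1 y), (rcons p2 y); split.
- by apply: contraNneq neq => /rcons_inj[p12]; rewrite last1 last2 p12.
- by rewrite rcons_path path1 -last1.
- by rewrite last_rcons.
- by rewrite rcons_path path2 -last2.
- by rewrite last_rcons.
Qed.

Lemma wf_lgraph_no_back_edge (G : lgraph S) (v x : vtx G) :
  wf_lgraph G -> connect (@edge _ _) v x -> ~~ edge x v.
Proof.
move=> [_ acyclic] /connectP[p path_p ->]; apply/negP => e_back.
have := acyclic v (rcons p v); rewrite rcons_path path_p e_back last_rcons eqxx.
by rewrite -size_eq0 size_rcons => /(_ isT isT).
Qed.

Lemma tree_graph_constructor_shared (t : term S) :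
  constructor_shared (tree_graph t).
Proof.
have edge_rcons (x y : vtx (tg_graph (tree_graph t))) :
    edge x y -> exists k, val y = rcons (val x) k.
  by rewrite edgeE /= /tree_succ mem_pmap_sub => /mapP [k _ ->]; exists k.
apply: constructor_shared_unique_parent => [x1 x2 y _|x _].
  move=> /edge_rcons[k1 e1] /edge_rcons[k2 e2].
  by apply: val_inj; rewrite e1 in e2; case: (rcons_inj e2).
by apply/negP => /edge_rcons[k]; case: (val x).
Qed.

End ConstructorShared.

Section Terms.
Variable S : signature.
Implicit Types (t u : term S) (ts : seq (term S)) (p : seq nat).

Lemma subterm_rcons t p k :
  subterm t (rcons p k) =
  if subterm t p is Some (App _ ts) then
    if k < size ts then Some (nth (Var _ 0) ts k) else None
  else None.
Proof. by elim: p t => [|k' p IH] [x|f ts] //=; case: ifP. Qed.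

Definition pos_args := fix aux (k : nat) ts : seq (seq nat) :=
  if ts is u :: us then map (cons k) (pos u) ++ aux k.+1 us else [::].

Lemma mem_pos_args j ts k p : k < size ts -> p \in pos (nth (Var _ 0) ts k) ->
  (j + k) :: p \in pos_args j ts.
Proof.
elim: ts j k => [|u us IH] j [|k] //= k_lt p_pos; rewrite mem_cat.
  by rewrite addn0 (map_f _ p_pos).
by rewrite -addSnnS IH ?orbT.
Qed.

Lemma mem_pos_subterm t p : subterm t p <> None -> p \in pos t.
Proof.
elim: p t => [|k p IH] [x|f ts] //=; rewrite ?nil_pos //.
by case: ifP => // k_lt /IH p_pos; rewrite inE (mem_pos_args 0 k_lt p_pos) orbT.
Qed.

Lemma vars_subterm t u p : subterm t p = Some u -> {subset vars u <= vars t}.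
Proof.
elim: p t => [t [<-] //|k p IH [x|f ts]] //=.
case: ifP => // k_lt /IH sub_vars x /sub_vars x_in; apply/flattenP.
exists (vars (nth (Var _ 0) ts k)) => //.
by rewrite -(nth_map _ [::]) ?mem_nth ?size_map.
Qed.

Fixpoint term_nested_ind (P : term S -> Prop) (P_Var : forall x, P (Var _ x))
    (P_App : forall f ts, List.Forall P ts -> P (App f ts)) t : P t :=
  match t with
  | Var x => P_Var x
  | App f ts => P_App f ts ((fix all_P ts := match ts return List.Forall P ts with
      | [::] => List.Forall_nil _
      | u :: us => List.Forall_cons _ (term_nested_ind P_Var P_App u) (all_P us)
      end) ts)
  end.

Lemma subterm_var t x : x \in vars t -> exists p, subterm t p = Some (Var _ x).
Proof.
elim/term_nested_ind: t => [y|f ts IH] /=.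
  by rewrite inE => /eqP ->; exists [::].
move=> x_in; suff [k [p [k_lt sub_x]]] : exists k p, k < size ts /\
    subterm (nth (Var _ 0) ts k) p = Some (Var _ x).
  by exists (k :: p); rewrite /= k_lt.
elim: IH x_in => [|u us IHu _ IHus] //=.
rewrite mem_cat => /orP[/IHu [p sub_x]|/IHus [k [p [k_lt sub_x]]]].
  by exists 0, p.
by exists k.+1, p.
Qed.

End Terms.

Lemma nm_inl S b (t : term S) p b' q : nm b t p = inl (b', q) -> b = b' /\ p = q.
Proof. by rewrite /nm; case: (subterm t p) => [[x|g ts]|] // [-> ->]. Qed.

Section RuleGraph.
Variables (S : signature) (l r : term S) (f0 : sym S) (ps0 : seq (term S)).
Hypothesis l_App : l = App f0 ps0.
Hypothesis vars_r : {subset vars r <= vars l}.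

Local Notation H := (gr_graph (rule_graph l r)).
Local Notation lH := (gr_l (rule_graph l r)).
Local Notation sH := (gr_r (rule_graph l r)).
Local Notation eH := (@edge S H).

Definition side_vertex (b : bool) (h : vtx H) : Prop :=
  exists2 p, val h = nm b (side l r b) p & subterm (side l r b) p <> None.

Lemma rule_edge (x y : vtx H) : eH x y -> exists b p k, [/\ val x = inl (b, p),
  val y = nm b (side l r b) (rcons p k) & k < nchildren (subterm (side l r b) p)].
Proof.
rewrite edgeE /= /rule_succ; case val_x: (val x) => [[b p]|z] //.
rewrite mem_pmap_sub => /mapP [k]; rewrite mem_iota add0n => /andP[_ k_lt] ->.
by exists b, p, k.
Qed.

Lemma rule_succ_unlabelled (x : vtx H) : lab x = None -> succ x = [::].
Proof.
rewrite /= /rule_lab /rule_succ; case: (val x) => [[b p]|z] //.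
by case: (subterm (side l r b) p) => [[y|g ts]|].
Qed.

Lemma side_vertex_connect b (x y : vtx H) :
  connect eH x y -> side_vertex b x -> side_vertex b y.
Proof.
apply: connect_preserved => a c /rule_edge [b' [p' [k [val_a val_c k_lt]]]].
case=> p; rewrite val_a => /esym /nm_inl [b_b' p_p'] sub_p; subst b' p'.
move: val_a k_lt; rewrite /nm.
case sub_p': (subterm (side l r b) p) => [[z|g ts]|] //= _ k_lt.
by exists (rcons p k); rewrite // subterm_rcons sub_p' k_lt.
Qed.

Lemma lhs_vertex (h : vtx H) : connect eH lH h -> side_vertex true h.
Proof. by move/side_vertex_connect; apply; exists [::]. Qed.

Lemma rhs_vertex (h : vtx H) : connect eH sH h -> side_vertex false h.
Proof. by move/side_vertex_connect; apply; exists [::]. Qed.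

Lemma lhs_rhs_unlabelled (h : vtx H) :
  connect eH lH h -> connect eH sH h -> lab h = None.
Proof.
move=> /lhs_vertex [p val_p _] /rhs_vertex [q val_q _].
move: (val_q); rewrite val_p /= /rule_lab val_p /nm.
by case: (subterm l p) => [[x|g ts]|]; case: (subterm r q) => [[y|g' us]|] //; case.
Qed.

Lemma lhs_root_lab : lab lH = Some f0.
Proof. by rewrite /= /rule_lab /= l_App. Qed.

Lemma lhs_position_reachable p : subterm l p <> None ->
  exists2 h : vtx H, val h = nm true l p & connect eH lH h.
Proof.
elim/last_ind: p => [|q k IH]; first by exists lH; rewrite ?connect0.
rewrite subterm_rcons; case sub_q: (subterm l q) => [[x|g ts]|] //.
case: ifP => // k_lt _; have [|h val_h lH_h] := IH; first by rewrite sub_q.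
have mem_k : nm true l (rcons q k) \in rnodes l r.
  rewrite mem_cat map_f // mem_pos_subterm //.
  by rewrite subterm_rcons sub_q /= ifT.
exists (SeqSub mem_k) => //; apply: connect_trans lH_h (connect1 _).
rewrite edgeE /= /rule_succ val_h /nm sub_q mem_pmap_sub /=.
by apply: map_f; rewrite mem_iota add0n sub_q.
Qed.

Lemma new_vertex_rhs (h : vtx H) : newP h -> exists q, val h = inl (false, q).
Proof.
case/andP => /rhs_vertex [q val_q _] not_lH_h; move: val_q; rewrite /nm.
case sub_q: (subterm r q) => [[x|g ts]|] val_q; try by exists q.
have [|p sub_p] := subterm_var (t := l) (x := x).
  by apply/vars_r/(vars_subterm sub_q); rewrite inE.
have [|h' val_h' lH_h'] := lhs_position_reachable (p := p); first by rewrite sub_p.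
suff h_h' : h = h' by rewrite h_h' lH_h' in not_lH_h.
by apply: val_inj; rewrite val_q val_h' /nm sub_p.
Qed.

Lemma rhs_root_orphan (y : vtx H) : newP sH -> ~~ eH y sH.
Proof.
move=> /new_vertex_rhs [q val_s]; apply/negP => /rule_edge [b [p [k [_ val_s' _]]]].
have [_ /(congr1 size)] := nm_inl (etrans (esym val_s') val_s).
have [_ <-] := nm_inl (val_s : nm false r [::] = _).
by rewrite size_rcons.
Qed.

Lemma new_vertex_unique_parent (x1 x2 y : vtx H) :
  newP y -> eH x1 y -> eH x2 y -> x1 = x2.
Proof.
move=> /new_vertex_rhs [q val_y].
have parent_pos x : eH x y -> exists2 p, val x = inl (false, p) & exists k, rcons p k = q.
  move=> /rule_edge [b [p [k [val_x val_y' _]]]].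
  have [b_false pk_q] := nm_inl (etrans (esym val_y') val_y).
  by exists p; [rewrite val_x b_false | exists k].
move=> /parent_pos [p1 val1 [k1 q1]] /parent_pos [p2 val2 [k2 q2]].
apply: val_inj; rewrite val1 val2; rewrite -q2 in q1.
by case: (rcons_inj q1) => ->.
Qed.

Section Firing.
Variables (G : tgraph S) (phi : vtx H -> vtx (tg_graph G)).
Hypothesis f0_fun : ~~ is_con f0.
Hypothesis G_wf : is_termgraph G.
Hypothesis G_shared : constructor_shared G.
Hypothesis phi_redex : is_redex phi.

Local Notation eG := (@edge S (tg_graph G)).
Local Notation rootG := (tg_root G).
(* The fired graph before removing the vertices unreachable from the root. *)
Local Notation WG :=
  (@LGraph S (W (rule_graph l r) G) (succW phi) (@labW S (rule_graph l r) G)).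
Local Notation eW := (@edge S WG).

Lemma redex_root_lab : lab (phi lH) = Some f0.
Proof. exact: (phi_redex.1 lH (connect0 _ _) f0 lhs_root_lab).1. Qed.

Lemma redex_root_not_con : con_vertex (phi lH) = false.
Proof. by rewrite /con_vertex redex_root_lab (negbTE f0_fun). Qed.

Lemma redex_root_not_con_from : ~ con_from (phi lH).
Proof. by move=> /(_ [::] isT); rewrite /con_path /= redex_root_not_con. Qed.

Lemma redex_connect (h : vtx H) : connect eH lH h -> connect eG (phi lH) (phi h).
Proof.
pose P x := connect eH lH x /\ connect eG (phi lH) (phi x).
move=> lH_h; suff [] : P h by [].
apply: (connect_preserved (P := P)) lH_h _; last by split; apply: connect0.
move=> x y e_xy [lH_x phi_x]; split; first exact: connect_trans lH_x (connect1 e_xy).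
apply: connect_trans phi_x (connect1 _).
case lab_x: (lab x) => [g|]; last by rewrite edgeE rule_succ_unlabelled in e_xy.
by have [_ succ_x] := phi_redex.1 x lH_x g lab_x; rewrite edgeE succ_x map_f.
Qed.

Lemma img_old h : ~~ newP h -> img phi h = inl (phi h).
Proof. by move=> old_h; rewrite /img insubF //; apply: negbTE. Qed.

Lemma img_new h (new_h : newP h) : img phi h = inr (Sub h new_h).
Proof. by rewrite /img (insubT _ new_h). Qed.

(* An old vertex reachable from the right root is a variable vertex of the
   left-hand side, whose image the redex condition makes constructor-only. *)
Lemma old_rhs_vertex h : connect eH sH h -> ~~ newP h ->
  connect eH lH h /\ con_from (phi h).
Proof.
move=> sH_h old_h; have lH_h : connect eH lH h by move: old_h; rewrite /newP sH_h negbK.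
by split; last apply: phi_redex.2 h lH_h (lhs_rhs_unlabelled lH_h sH_h).
Qed.

Lemma old_succ_new (u : NewV (rule_graph l r)) h : h \in succ (val u) -> ~~ newP h ->
  connect eH lH h /\ con_from (phi h).
Proof.
move=> succ_h; apply: old_rhs_vertex; case/andP: (valP u) => sH_u _.
by apply: connect_trans sH_u (connect1 _); rewrite edgeE.
Qed.

Lemma tgt_cases : (exists2 u, tgt phi = inr u & val u = sH) \/
  (exists2 v, tgt phi = inl v & con_from v).
Proof.
rewrite /tgt; case new_s: (newP sH).
  by left; exists (Sub sH new_s); rewrite ?(img_new new_s) ?SubK.
right; exists (phi sH); first by rewrite img_old ?new_s.
exact: (old_rhs_vertex (connect0 _ _) (negbT new_s)).2.
Qed.

(* A successor of a constructor-only vertex is never the redex root, so it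
   is not redirected. *)
Lemma edge_inl_con_from (v : vtx (tg_graph G)) (y : vtx WG) :
  con_from v -> eW (inl v) y ->
  exists2 v', y = inl v' & eG v v'.
Proof.
move=> con_v; rewrite edgeE /= => /mapP[_ /mapP[v' succ_v' ->] ->].
have e_vv' : eG v v' by rewrite edgeE.
exists v' => //; rewrite /redir; case: eqP => // -[v'_root].
have := con_from_edge e_vv' con_v (p := [::]) isT.
by rewrite /con_path /= v'_root redex_root_not_con.
Qed.

Lemma con_from_inl (v : vtx (tg_graph G)) : con_from v -> con_from (inl v : vtx WG).
Proof.
move=> con_v p; elim: p v con_v => [|y p IH] v con_v /=.
  by move=> _; have := con_v [::] isT.
case/andP=> /(edge_inl_con_from con_v)[v' -> e_vv'] path_p.
have /andP[con_vertex_v _] := con_v [:: v'] (introT andP (conj e_vv' isT)).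
have con_v' := con_from_edge e_vv' con_v.
by apply/andP; split; last exact: IH path_p.
Qed.

Definition origin (x : vtx WG) : vtx (tg_graph G) :=
  if x is inl v then v else phi lH.

Lemma origin_tgt : connect eG (phi lH) (origin (tgt phi)).
Proof.
rewrite /tgt; case new_s: (newP sH); first by rewrite (img_new new_s) connect0.
rewrite img_old ?new_s //; apply: redex_connect.
exact: (old_rhs_vertex (connect0 _ _) (negbT new_s)).1.
Qed.

Lemma origin_edge x y : eW x y -> connect eG (origin x) (origin y).
Proof.
case: x => [v|u]; rewrite edgeE /= => /mapP[_ /mapP[h succ_h ->] ->];
  rewrite /redir; case: eqP => [e_root|_]; try exact: origin_tgt.
- case: e_root => h_root; apply: connect_trans (connect1 _) origin_tgt.
  by rewrite edgeE -h_root.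
- by apply: connect1.
case new_h: (@newP S (rule_graph l r) h); first by rewrite (img_new new_h) connect0.
rewrite img_old ?new_h //; apply: redex_connect.
exact: (old_succ_new succ_h (negbT new_h)).1.
Qed.

Lemma origin_reach x : reachW phi x -> connect eG rootG (origin x).
Proof.
move=> root_x.
apply: (connect_preserved (P := fun x => connect eG rootG (origin x))) root_x _.
  by move=> a b /origin_edge e_ab root_a; apply: connect_trans root_a e_ab.
rewrite /rootW /redir; case: eqP => [[->]|_]; last exact: connect0.
exact: origin_tgt.
Qed.

Lemma con_from_tgt_inl v : tgt phi = inl v -> con_from (inl v : vtx WG).
Proof. by case: tgt_cases => [[u ->]|[v' -> con_v'] [<-]]; last apply: con_from_inl. Qed.

Lemma parent_old x v : eW x (inl v) -> ~ con_from (inl v : vtx WG) ->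
  exists2 v', x = inl v' & eG v' v.
Proof.
case: x => [v'|u]; rewrite edgeE /= => /mapP[_ /mapP[h succ_h ->]];
  rewrite /redir; case: eqP => [_ /esym/con_from_tgt_inl //|_] e_img.
  by case: e_img => ->; exists v'.
case new_h: (@newP S (rule_graph l r) h); first by rewrite (img_new new_h) in e_img.
rewrite img_old ?new_h // in e_img; case: e_img => -> []; apply: con_from_inl.
exact: (old_succ_new succ_h (negbT new_h)).2.
Qed.

Lemma parent_new x u : eW x (inr u) ->
  (exists v, [/\ x = inl v, eG v (phi lH) & tgt phi = inr u]) \/
  (exists2 u', x = inr u' & eH (val u') (val u)).
Proof.
case: x => [v|u']; rewrite edgeE /= => /mapP[_ /mapP[h succ_h ->]];
  rewrite /redir; case: eqP => [|_] //.
- by case=> <- e_tgt; left; exists v; rewrite ?edgeE.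
- case new_h: (@newP S (rule_graph l r) h); first by rewrite (img_new new_h).
  rewrite img_old ?new_h // => -[phi_h] _; case: redex_root_not_con_from.
  by rewrite -phi_h; apply: (old_succ_new succ_h (negbT new_h)).2.
case new_h: (@newP S (rule_graph l r) h); last by rewrite img_old ?new_h.
by rewrite (img_new new_h) => -[->]; right; exists u'; rewrite ?SubK.
Qed.

Lemma fire_unique_parent_old x1 x2 v : reachW phi x1 -> reachW phi x2 ->
  ~ con_from (inl v : vtx WG) -> eW x1 (inl v) -> eW x2 (inl v) -> x1 = x2.
Proof.
move=> reach1 reach2 not_con /parent_old/(_ not_con)[v1 x1_v1 e1].
move=> /parent_old/(_ not_con)[v2 x2_v2 e2]; subst x1 x2.
case: (eqVneq v1 v2) => [-> //|neq]; case: not_con; apply: con_from_inl.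
exact: constructor_shared_parents G_shared
  (origin_reach reach1) (origin_reach reach2) e1 e2 neq.
Qed.

(* The copy of the right root has taken over the parents of the redex root. *)
Lemma tgt_parent x u : tgt phi = inr u -> reachW phi x -> eW x (inr u) ->
  exists2 v, x = inl v & eG v (phi lH) /\ connect eG rootG v.
Proof.
move=> tgt_u reach_x /parent_new[[v [x_v e_v _]]|[u' _ e_u']].
  by exists v => //; split=> //; rewrite -[v]/(origin (inl v)) -x_v origin_reach.
case: tgt_cases => [[u0 tgt_u0 u0_s]|[v tgt_v _]]; last by rewrite tgt_u in tgt_v.
have u0_u : u0 = u by rewrite tgt_u in tgt_u0; case: tgt_u0.
have new_s : newP sH by rewrite -u0_s; apply: valP.
by case/negP: (rhs_root_orphan (val u') new_s); rewrite -u0_s u0_u.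
Qed.

Lemma fire_unique_parent_tgt x1 x2 u : tgt phi = inr u ->
  reachW phi x1 -> reachW phi x2 -> eW x1 (inr u) -> eW x2 (inr u) -> x1 = x2.
Proof.
move=> tgt_u reach1 reach2 /(tgt_parent tgt_u reach1)[v1 -> [e1 root_v1]].
move=> /(tgt_parent tgt_u reach2)[v2 -> [e2 root_v2]].
case: (eqVneq v1 v2) => [-> //|neq]; case: redex_root_not_con_from.
exact: constructor_shared_parents G_shared root_v1 root_v2 e1 e2 neq.
Qed.

Lemma fire_unique_parent_new x1 x2 u : tgt phi <> inr u ->
  eW x1 (inr u) -> eW x2 (inr u) -> x1 = x2.
Proof.
move=> tgt_u.
have parent x : eW x (inr u) -> exists2 u', x = inr u' & eH (val u') (val u).
  by case/parent_new => [[v [_ _ /tgt_u]]|].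
move=> /parent[u1 -> e1] /parent[u2 -> e2]; congr inr; apply: val_inj.
exact: new_vertex_unique_parent (valP u) e1 e2.
Qed.

Lemma fire_unique_parent x1 x2 y : reachW phi x1 -> reachW phi x2 ->
  ~ con_from (y : vtx WG) -> eW x1 y -> eW x2 y -> x1 = x2.
Proof.
case: y => [v|u] reach1 reach2 not_con; first exact: fire_unique_parent_old.
case: (tgt phi =P inr u) => [tgt_u|tgt_u]; first exact: fire_unique_parent_tgt.
exact: fire_unique_parent_new.
Qed.

Lemma fire_root_orphan x : reachW phi x ->
  ~ con_from (rootW phi : vtx WG) -> ~~ eW x (rootW phi).
Proof.
move=> reach_x; rewrite /rootW /redir; case: eqP => [[root_phi]|_] not_con; apply/negP.
  case tgt_w: (tgt phi) not_con => [v|u] not_con.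
    by case: not_con; apply: con_from_tgt_inl.
  move=> /(tgt_parent tgt_w reach_x)[v _ [e_v root_v]].
  by case/negP: (wf_lgraph_no_back_edge G_wf root_v); rewrite root_phi.
move=> /parent_old/(_ not_con)[v x_v e_v].
have root_v : connect eG rootG v by rewrite -[v]/(origin (inl v)) -x_v origin_reach.
by case/negP: (wf_lgraph_no_back_edge G_wf root_v).
Qed.

Lemma fire_edgeE (x y : vtx (tg_graph (fire phi))) : edge x y = eW (val x) (val y).
Proof. by rewrite edgeE /= /succF mem_pmap_sub. Qed.

Lemma con_from_fire (x : vtx (tg_graph (fire phi))) :
  con_from (val x : vtx WG) -> con_from x.
Proof.
move=> con_x p path_p.
have path_val : path eW (val x) (map val p).
  by rewrite path_map; apply: sub_path path_p => a b; rewrite fire_edgeE.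
by have := con_x _ path_val; rewrite /con_path -map_cons all_map.
Qed.

Lemma fire_constructor_shared : constructor_shared (fire phi).
Proof.
apply: constructor_shared_unique_parent => [x1 x2 y not_con|x not_con].
  rewrite !fire_edgeE => e1 e2; apply: val_inj.
  apply: fire_unique_parent (valP x1) (valP x2) _ e1 e2.
  by move=> con_y; apply/not_con/con_from_fire.
rewrite fire_edgeE; apply: fire_root_orphan (valP x) _.
by move=> con_root; apply/not_con/con_from_fire.
Qed.

End Firing.

End RuleGraph.

Theorem lemma10 (S : signature) :
  (forall t : term S, closed_term t -> constructor_shared (tree_graph t)) /\
  (forall (R : seq (term S * term S)) (G I : tgraph S),
      crs R -> is_termgraph G -> closed_graph G -> constructor_shared G ->
      gstep R G I -> constructor_shared I).
Proof.
split=> [t _|R G I [rules _] G_wf _ G_shared [l [r [lr_R [phi [phi_redex G_I]]]]]].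
  exact: tree_graph_constructor_shared.
have [_ _ [f [ps [l_App [f_fun _]]]] _ vars_r] := rules l r lr_R.
apply: (tg_iso_constructor_shared G_I).
exact: (fire_constructor_shared l_App vars_r f_fun G_wf G_shared phi_redex).
Qed.
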